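(* For every integer $k\ge 2$, $$\sum_{n\geq 0}C_{\Pi_{n,k}}(x)\,t^{n}=\frac{1}{1-\bigl(k+(k-1)x\bigr)t-(1+x)t^{2}}.$$
   Context: For an integer $k\ge 2$, a $k$-Pell string is a finite word over the alphabet $\{0,1,\ldots,k-1,kk\}$, i.e. a word over $\{0,1,\ldots,k\}$ in which every maximal run of the letter $k$ has even length. For $n\ge 0$, the $k$-Pell graph $\Pi_{n,k}$ has as vertices all $k$-Pell strings of length $n$, and two vertices are adjacent if one is obtained from the other either by replacing a single letter $i$ by $i+1$ (or vice versa) for some $i\in\{0,1,\ldots,k-2\}$, or by replacing one factor $(k-1)(k-1)$ by $kk$ (or vice versa), in such a way that the resulting string is again a $k$-Pell string. The cube polynomial of a graph $G$ is $C_G(x)=\sum_{i\ge 0}c_i(G)x^i$, where $c_i(G)$ is the number of induced subgraphs of $G$ isomorphic to the hypercube $Q_i$. *)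

From mathcomp Require Import all_boot all_order all_algebra.
Set Implicit Arguments. Unset Strict Implicit. Unset Printing Implicit Defensive.
Import GRing.Theory.
Local Open Scope ring_scope.

(* A k-Pell string: a word over {0,...,k} that is a word over the alphabet
   {0,...,k-1, kk}, i.e. every letter k is (greedily) paired with a following k.
   This is equivalent to: every maximal run of k has even length. *)
Fixpoint pellb (k : nat) (s : seq nat) : bool :=
  match s with
  | [::] => true
  | a :: s' =>
      if a == k then
        match s' with
        | [::] => false
        | b :: s'' => (b == k) && pellb k s''
        end
      else pellb k s'
  end.

Definition word (n k : nat) := (n.-tuple 'I_k.+1)%type.

Definition wseq n k (w : word n k) : seq nat := map (@nat_of_ord _) w.

Definition is_pell n k (w : word n k) : bool := pellb k (wseq w).

(* adjacency of the k-Pell graph on words (seq nat) of equal length: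
   (1) replace one letter i by i+1 (or back), i in {0,...,k-2};
   (2) replace one factor (k-1)(k-1) by kk (or back). *)
Definition pell_adj (k : nat) (u v : seq nat) : bool :=
  let n := size u in
  (size u == size v) &&
  (has (fun j =>
      [&& all (fun l => (l == j) || (nth 0%N u l == nth 0%N v l)) (iota 0 n),
          ((nth 0%N u j).+1 == nth 0%N v j) || ((nth 0%N v j).+1 == nth 0%N u j)
        & (maxn (nth 0%N u j) (nth 0%N v j) <= k.-1)%N]) (iota 0 n)
   ||
   has (fun j =>
      [&& (j.+1 < n)%N,
          all (fun l => [|| l == j, l == j.+1 | nth 0%N u l == nth 0%N v l]) (iota 0 n)
        & [&& nth 0%N u j == k.-1, nth 0%N u j.+1 == k.-1,
              nth 0%N v j == k & nth 0%N v j.+1 == k]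
          || [&& nth 0%N v j == k.-1, nth 0%N v j.+1 == k.-1,
              nth 0%N u j == k & nth 0%N u j.+1 == k]]) (iota 0 n)).

Definition pi_adj n k (u v : word n k) : bool := pell_adj k (wseq u) (wseq v).

Definition cube (i : nat) := {ffun 'I_i -> bool}.
Definition cube_adj i (a b : cube i) : bool := #|[set j | a j != b j]| == 1%N.

Definition cube_count (n k i : nat) : nat :=
  #|[set S : {set word n k} |
      [forall w in S, is_pell w] &&
      [exists f : {ffun cube i -> word n k},
         [&& injectiveb f, f @: setT == S &
             [forall a, forall b, pi_adj (f a) (f b) == cube_adj a b]]]]|.

(* cube polynomial C_{Pi_{n,k}}(x) in Z[x]; c_i = 0 for i >= #|word n k| + 1
   (since Q_i has 2^i > i vertices), so the truncated sum is the full sum. *)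
Definition cube_poly (n k : nat) : {poly int} :=
  \sum_(i < #|{: word n k}|.+1) (cube_count n k i)%:R *: 'X^i.

(* coefficients (in t) of the denominator 1 - (k + (k-1)x) t - (1 + x) t^2 *)
Definition pell_denom (k j : nat) : {poly int} :=
  if j == 0%N then 1
  else if j == 1%N then - (k%:R + (k.-1)%:R *: 'X)
  else if j == 2%N then - (1 + 'X)
  else 0.

From mathcomp Require Import all_boot all_order all_algebra zify ring.
Set Implicit Arguments. Unset Strict Implicit. Unset Printing Implicit Defensive.

(* Sort the induced cubes of Pi_{n+1,k} by their first letters.  Along an edge
   the first letter changes by at most one, and at a given vertex at most one
   edge raises it and at most one lowers it, since the rest of the neighbour is
   then forced.  Hence on an induced Q_i the first letter is either constant or
   equal to b + [x_j = s] for a single coordinate j of the cube.  Cubes with a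
   constant first letter a < k are copies of cubes of Pi_{n,k}, those starting
   with kk are copies of cubes of Pi_{n-1,k}; a cube whose first letter switches
   between a-1 and a < k, or between (k-1)(k-1) and kk, is a Q_{i-1} of Pi_{n,k},
   resp. of Pi_{n-1,k}, doubled along j.  Therefore
     c_i(n+1) = k c_i(n) + c_i(n-1) + (k-1) c_{i-1}(n) + c_{i-1}(n-1),
   i.e. C_{n+2} = (k + (k-1)x) C_{n+1} + (1 + x) C_n with C_0 = 1 and
   C_1 = k + (k-1)x, which is the claimed generating function. *)

Section PellEdge.
Variable k : nat.

Definition letter_swap (x y : nat) : bool :=
  ((x.+1 == y) || (y.+1 == x)) && (maxn x y <= k.-1).

Definition pair_swap (x x2 y y2 : nat) : bool :=
  [&& x == k.-1, x2 == k.-1, y == k & y2 == k]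
  || [&& y == k.-1, y2 == k.-1, x == k & x2 == k].

Fixpoint pell_edge (u v : seq nat) : bool :=
  match u, v with
  | x :: u', y :: v' =>
    [|| (x == y) && pell_edge u' v', letter_swap x y && (u' == v') |
        if (u', v') is (x2 :: u'', y2 :: v'') then pair_swap x x2 y y2 && (u'' == v'')
        else false]
  | _, _ => false
  end.

Definition letter_move (n : nat) (u v : seq nat) (j : nat) : bool :=
  [&& all (fun l => (l == j) || (nth 0 u l == nth 0 v l)) (iota 0 n),
      ((nth 0 u j).+1 == nth 0 v j) || ((nth 0 v j).+1 == nth 0 u j)
    & maxn (nth 0 u j) (nth 0 v j) <= k.-1].

Definition pair_move (n : nat) (u v : seq nat) (j : nat) : bool :=
  [&& j.+1 < n,
      all (fun l => [|| l == j, l == j.+1 | nth 0 u l == nth 0 v l]) (iota 0 n)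
    & [&& nth 0 u j == k.-1, nth 0 u j.+1 == k.-1, nth 0 v j == k & nth 0 v j.+1 == k]
      || [&& nth 0 v j == k.-1, nth 0 v j.+1 == k.-1, nth 0 u j == k & nth 0 u j.+1 == k]].

Lemma pell_adj_moves u v : pell_adj k u v =
  (size u == size v) && (has (letter_move (size u) u v) (iota 0 (size u))
                         || has (pair_move (size u) u v) (iota 0 (size u))).
Proof. by []. Qed.

Lemma iota_succ n : iota 1 n = map succn (iota 0 n).
Proof. by rewrite (iotaDl 1 0). Qed.

Lemma all_nth_eqseq (u v : seq nat) : size u = size v ->
  all (fun l => nth 0 u l == nth 0 v l) (iota 0 (size u)) = (u == v).
Proof.
elim: u v => [|x u IH] [|y v] //= [/IH E].
by rewrite eqseq_cons -E iota_succ all_map.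
Qed.

Lemma letter_move_consS n x y u v j :
  letter_move n.+1 (x :: u) (y :: v) j.+1 = (x == y) && letter_move n u v j.
Proof. by rewrite /letter_move /= iota_succ all_map /=; case: (x == y). Qed.

Lemma pair_move_consS n x y u v j :
  pair_move n.+1 (x :: u) (y :: v) j.+1 = (x == y) && pair_move n u v j.
Proof.
by rewrite /pair_move /= iota_succ all_map /= !ltnS; case: (x == y); rewrite ?andbF.
Qed.

Lemma letter_move_cons0 x y u v : size u = size v ->
  letter_move (size u).+1 (x :: u) (y :: v) 0 = letter_swap x y && (u == v).
Proof.
move=> Es; rewrite /letter_move /= iota_succ all_map /= -all_nth_eqseq //.
by case: (all _ _); rewrite ?andbT ?andbF.
Qed.

Lemma pair_move_cons0 x y u v : size u = size v ->
  pair_move (size u).+1 (x :: u) (y :: v) 0 =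
  if (u, v) is (x2 :: u', y2 :: v') then pair_swap x x2 y y2 && (u' == v') else false.
Proof.
case: u v => [|x2 u] [|y2 v] //= [Es].
rewrite /pair_move /= (iotaDl 2 0) all_map.
rewrite (eq_all (a2 := fun l => nth 0 u l == nth 0 v l)) ?all_nth_eqseq //.
by case: (u == v); rewrite ?andbT ?andbF.
Qed.

Lemma pell_adj_cons x y u v : size u = size v ->
  pell_adj k (x :: u) (y :: v) =
  [|| (x == y) && pell_adj k u v, letter_swap x y && (u == v) |
      if (u, v) is (x2 :: u', y2 :: v') then pair_swap x x2 y y2 && (u' == v') else false].
Proof.
move=> Es; rewrite !pell_adj_moves /= Es eqxx /= -Es iota_succ !has_map.
rewrite (eq_has (a2 := fun j => (x == y) && letter_move (size u) u v j)); last first.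
  by move=> j /=; rewrite letter_move_consS.
rewrite [has (preim _ (pair_move _ _ _)) _]
  (eq_has (a2 := fun j => (x == y) && pair_move (size u) u v j)); last first.
  by move=> j /=; rewrite pair_move_consS.
have has_andl (p : pred nat) s : has (fun j => (x == y) && p j) s = (x == y) && has p s.
  by case: (x == y) => //=; apply/hasP => -[].
rewrite letter_move_cons0 // pair_move_cons0 // !has_andl eqxx /= andb_orr.
by case: (has (letter_move _ _ _) _); case: (has (pair_move _ _ _) _);
  case: (x == y); case: (letter_swap _ _ && _); rewrite /= ?orbT ?orbF.
Qed.

Lemma pell_adjE u v : size u = size v -> pell_adj k u v = pell_edge u v.
Proof. by elim: u v => [|x u IH] [|y v] //= [Es]; rewrite pell_adj_cons // IH. Qed.

End PellEdge.

Section PellEdgeTheory.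
Variable k : nat.
Hypothesis k_gt1 : 1 < k.
Local Notation edge := (pell_edge k).

Lemma pell_edge_sym u v : edge u v = edge v u.
Proof.
elim: u v => [|x u IH] [|y v] //=.
rewrite IH eq_sym (eq_sym u) /letter_swap maxnC (orbC (x.+1 == y)).
case: u v {IH} => [|x2 u] [|y2 v] //=.
by rewrite (eq_sym u) /pair_swap (orbC [&& x == _, _, _ & _]).
Qed.

Lemma pell_edge_cons2 a u v : edge (a :: u) (a :: v) = edge u v.
Proof.
rewrite /= eqxx /letter_swap /=.
have -> : (a.+1 == a) = false by elim: a.
case: u v => [|x2 u] [|y2 v] //=; rewrite ?orbF // /pair_swap.
by case: (a =P k.-1); case: (a =P k) => //= ? ?; lia.
Qed.

Lemma pell_edge_head_le a b u v : edge (a :: u) (b :: v) -> b <= a.+1.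
Proof.
case/or3P => [/andP [/eqP -> _] | /andP [/andP [/orP [] /eqP <- _] _] |]; try lia.
case: u v => [|x2 u] [|y2 v] // /andP [/orP [] /and4P [/eqP -> _ /eqP -> _] _]; lia.
Qed.

Lemma pell_edge_up a b u v : edge (a :: u) (b :: v) -> b = a.+1 ->
  (b <= k.-1 /\ v = u) \/ [/\ a = k.-1, b = k & exists w, u = k.-1 :: w /\ v = k :: w].
Proof.
move=> + eb; subst b.
case/or3P => [/andP [/eqP] | /andP [/andP [_ le_ak] /eqP uv] |]; first lia.
  by left; split; [rewrite geq_max in le_ak; case/andP: le_ak|].
case: u v => [|x2 u] [|y2 v] //= /andP [/orP [] /and4P [/eqP h1 /eqP h2 /eqP h3 /eqP h4] /eqP uv];
  last lia.
by right; split=> //; exists u; rewrite h2 h4 uv.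
Qed.

Lemma pell_edge_up_tail a u v v' :
  edge (a :: u) (a.+1 :: v) -> edge (a :: u) (a.+1 :: v') -> v = v'.
Proof.
move=> /pell_edge_up /(_ erefl) [[? ->]|[? ? [w [-> ->]]]];
  move=> /pell_edge_up /(_ erefl) [[? ->]|[? ? [w' [eu ->]]]] //; try lia.
by case: eu => ->.
Qed.

Lemma pell_edge_up_tail_inj a u u' v :
  edge (a :: u) (a.+1 :: v) -> edge (a :: u') (a.+1 :: v) -> u = u'.
Proof.
move=> /pell_edge_up /(_ erefl) [[? ->]|[? ? [w [-> ->]]]];
  move=> /pell_edge_up /(_ erefl) [[? //]|[? ? [w' [-> ev]]]]; try lia.
by case: ev => ->.
Qed.

Lemma pell_edge_letter_cross a u v : 0 < a <= k.-1 -> edge (a.-1 :: u) (a :: v) = (u == v).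
Proof.
move=> a_range /=.
have -> : letter_swap k a.-1 a by rewrite /letter_swap geq_max; apply/andP; split; lia.
have -> : (a.-1 == a) = false by apply/eqP; lia.
case: (u == v); rewrite ?orbT //=.
case: u v => [|x2 u] [|y2 v] //=; rewrite /pair_swap.
have -> : (a == k) = false by apply/eqP; lia.
have -> : (a.-1 == k) = false by apply/eqP; lia.
by rewrite !andbF.
Qed.

Lemma pell_edge_pair_cross u v : edge [:: k.-1, k.-1 & u] [:: k, k & v] = (u == v).
Proof.
rewrite /= /letter_swap /pair_swap !eqxx /=.
have -> : (k.-1 == k) = false by apply/eqP; lia.
have -> : maxn k.-1 k <= k.-1 = false by apply/negbTE; rewrite -ltnNge leq_max; lia.
by rewrite !andbF.
Qed.

End PellEdgeTheory.

Section Flip.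
Variable i : nat.
Implicit Types (x y : cube i) (j l : 'I_i).

Definition flip l x : cube i := [ffun m => if m == l then ~~ x m else x m].

Lemma flipK l : involutive (flip l).
Proof. by move=> x; apply/ffunP => m; rewrite !ffunE; case: eqP => // _; rewrite negbK. Qed.

Lemma flipC j l x : flip j (flip l x) = flip l (flip j x).
Proof. by apply/ffunP => m; rewrite !ffunE; case: (m == j); case: (m == l). Qed.

Lemma flip_injl x j l : flip j x = flip l x -> j = l.
Proof.
move=> E; apply/eqP/negPn/negP => ne.
have := congr1 (fun z : cube i => z j) E; rewrite !ffunE eqxx (negbTE ne).
by case: (x j).
Qed.

Lemma cube_adj_flip x l : cube_adj x (flip l x).
Proof.
rewrite /cube_adj (_ : [set m | x m != flip l x m] = [set l]) ?cards1 //.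
by apply/setP => m; rewrite !inE ffunE; case: (m =P l) => [->|]; case: (x _).
Qed.

Lemma cube_adjP x y : cube_adj x y -> exists l, y = flip l x.
Proof.
move/cards1P=> [l E]; exists l; apply/ffunP => m; rewrite ffunE.
have := congr1 (fun A : {set 'I_i} => m \in A) E; rewrite !inE.
by case: (m =P l) => [->|_]; case: (x _); case: (y _).
Qed.

Lemma cube_adjxx x : cube_adj x x = false.
Proof.
rewrite /cube_adj (_ : [set m | x m != x m] = set0) ?cards0 //.
by apply/setP => m; rewrite !inE eqxx.
Qed.

Lemma flip_invariant_eq (T : Type) (Q : cube i -> T) (J : pred 'I_i) :
  (forall x l, J l -> Q (flip l x) = Q x) ->
  forall x y, (forall l, ~~ J l -> x l = y l) -> Q x = Q y.
Proof.
move=> QJ x y; move dxy: #|[set l | x l != y l]| => d.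
elim: d x dxy => [|d IH] x dxy xy_offJ.
  congr Q; apply/ffunP => m; apply/eqP/negPn/negP => ne.
  by have := cards0_eq dxy; move/setP/(_ m); rewrite !inE ne.
have [l] : exists l, l \in [set l | x l != y l] by apply/card_gt0P; rewrite dxy.
rewrite inE => ne.
have Jl : J l by apply/negPn/negP => nJ; rewrite xy_offJ ?eqxx in ne.
rewrite -(QJ x l Jl); apply: IH => [|m nJ].
  have -> : [set m | flip l x m != y m] = [set m | x m != y m] :\ l.
    apply/setP => m; rewrite !inE !ffunE.
    by case: (m =P l) => [->|_] //=; move: ne; case: (x l); case: (y l).
  by move: dxy; rewrite (cardsD1 l) inE ne add1n => -[].
rewrite ffunE ifN ?xy_offJ //; apply: contraNneq nJ => ->; exact: Jl.
Qed.

End Flip.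

Lemma cube0_eq (x y : cube 0) : x = y.
Proof. by apply/ffunP => -[]. Qed.

Section HeightOnCube.
Variable i : nat.
Implicit Types (x y : cube i) (j l : 'I_i).
Variable h : cube i -> nat.
Hypothesis h_flip_le : forall x l, h (flip l x) <= (h x).+1.
Hypothesis h_up_uniq : forall x j l,
  h (flip j x) = (h x).+1 -> h (flip l x) = (h x).+1 -> j = l.
Hypothesis h_down_uniq : forall x j l,
  (h (flip j x)).+1 = h x -> (h (flip l x)).+1 = h x -> j = l.

Lemma h_flip_near x l : h (flip l x) <= (h x).+1 /\ h x <= (h (flip l x)).+1.
Proof. by split; last rewrite -{1}(flipK l x). Qed.

Lemma h_no_two_steps x j l : j != l ->
  ~ (h (flip j x) = (h x).+1 /\ h (flip l x) = (h x).+1) /\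
  ~ ((h (flip j x)).+1 = h x /\ (h (flip l x)).+1 = h x).
Proof.
move=> /eqP ne; split=> -[hj hl]; apply: ne; [exact: h_up_uniq hj hl | exact: h_down_uniq hj hl].
Qed.

(* No corner of the square [x, flip j x, flip l x, flip j (flip l x)] sees two
   ascents or two descents, which forces opposite edges to change [h] equally. *)
Lemma h_square x j l : j != l -> h (flip j x) + h (flip l x) = h x + h (flip j (flip l x)).
Proof.
move=> ne; have ne' : l != j by rewrite eq_sym.
have := h_no_two_steps x ne.
have := h_no_two_steps (flip j x) ne; rewrite flipK (flipC l j).
have := h_no_two_steps (flip l x) ne; rewrite flipK.
have := h_no_two_steps (flip j (flip l x)) ne'; rewrite flipK (flipC l j) flipK.
have := h_flip_near x j; have := h_flip_near x l.
have := h_flip_near (flip l x) j; have := h_flip_near (flip j x) l; rewrite (flipC l j).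
lia.
Qed.

Definition raises j x := h (flip j x) == (h x).+1.

Lemma raises_flip j l x : l != j -> raises j (flip l x) = raises j x.
Proof. by move=> ne; have := h_square x ne; rewrite /raises flipC => sq; apply/eqP/eqP; lia. Qed.

Lemma raises_of_change l x : h (flip l x) != h x -> exists y, raises l y.
Proof.
move=> ne; have [le1 le2] := h_flip_near x l.
case: (ltngtP (h (flip l x)) (h x)) => [lt||eq]; last by rewrite eq eqxx in ne.
  by exists (flip l x); rewrite /raises flipK; apply/eqP; lia.
by exists x; apply/eqP; lia.
Qed.

Lemma raises_on_face j y x : raises j y -> x j = y j -> raises j x.
Proof.
move=> up_y xy; rewrite (@flip_invariant_eq _ _ (raises j) (predC1 j) _ x y) //.
  by move=> z l /= ne; apply: raises_flip.
by move=> l /negPn /eqP ->.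
Qed.

Lemma h_flip_other j y l x : raises j y -> l != j -> h (flip l x) = h x.
Proof.
move=> up_y ne; apply/eqP/negPn/negP => /raises_of_change [x1 up_x1].
have [z [zj up_z]] : exists z : cube i, z j = y j /\ raises l z.
  case: (boolP (x1 j == y j)) => [/eqP|] zj; first by exists x1.
  exists (flip j x1); rewrite raises_flip 1?eq_sym // ffunE eqxx.
  by split=> //; move: zj; case: (x1 j); case: (y j).
have /eqP := raises_on_face up_y zj; move/eqP: up_z => up_z /(h_up_uniq up_z) lj.
by rewrite lj eqxx in ne.
Qed.

Lemma height_structure :
  (forall x y, h x = h y) \/ exists j s b, forall x, h x = b + (x j == s).
Proof.
case: (boolP [exists x, exists j, h (flip j x) != h x]); last first.
  move/existsPn => const; left => x y.
  apply: (@flip_invariant_eq _ _ h predT) => // z l _.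
  by move: (const z); rewrite negb_exists => /forallP /(_ l) /negPn /eqP.
case/existsP => x0 /existsP [j /raises_of_change [y up_y]]; right.
have h_face x x' : x j = x' j -> h x = h x'.
  move=> xx'; apply: (@flip_invariant_eq _ _ h (predC1 j)) => [z l /= ne|l /negPn /eqP -> //].
  exact: h_flip_other up_y ne.
exists j, (~~ y j), (h y) => x.
case: (boolP (x j == y j)) => [/eqP xy|ne].
  have -> : (x j == ~~ y j) = false by rewrite xy; case: (y j).
  by rewrite addn0; apply: h_face.
have -> : x j == ~~ y j by move: ne; case: (x j); case: (y j).
move/eqP: up_y; rewrite addn1 => <-; apply: h_face.
by rewrite ffunE eqxx; move: ne; case: (x j); case: (y j).
Qed.

End HeightOnCube.

Section CubeInsert.
Variable i : nat.
Implicit Types (j : 'I_i.+1) (y : cube i) (x : cube i.+1).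

Definition cube_ins j (b : bool) y : cube i.+1 :=
  [ffun m => if unlift j m is Some m' then y m' else b].

Definition cube_proj j x : cube i := [ffun m => x (lift j m)].

Lemma cube_ins_at j b y : cube_ins j b y j = b.
Proof. by rewrite ffunE unlift_none. Qed.

Lemma cube_insK j b : cancel (cube_ins j b) (cube_proj j).
Proof. by move=> y; apply/ffunP => m; rewrite !ffunE liftK. Qed.

Lemma cube_projK j x : cube_ins j (x j) (cube_proj j x) = x.
Proof. by apply/ffunP => m; rewrite ffunE; case: unliftP => [m' ->|->]; rewrite ?ffunE. Qed.

Lemma cube_ins_inj j b b' y y' : cube_ins j b y = cube_ins j b' y' -> b = b' /\ y = y'.
Proof.
move=> E; split; first by rewrite -(cube_ins_at j b y) E cube_ins_at.
by rewrite -(cube_insK j b y) E cube_insK.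
Qed.

Lemma flip_cube_ins_lift j b y l : flip (lift j l) (cube_ins j b y) = cube_ins j b (flip l y).
Proof.
apply/ffunP => m; rewrite !ffunE; case: unliftP => [m' ->|->].
  by rewrite (inj_eq (@lift_inj _ j)) ffunE.
by rewrite (negbTE (neq_lift _ _)).
Qed.

Lemma flip_cube_ins_at j b y : flip j (cube_ins j b y) = cube_ins j (~~ b) y.
Proof.
apply/ffunP => m; rewrite !ffunE; case: unliftP => [m' ->|->].
  by rewrite eq_sym (negbTE (neq_lift _ _)).
by rewrite eqxx.
Qed.

Lemma cube_adj_ins j b b' y y' :
  cube_adj (cube_ins j b y) (cube_ins j b' y') = if b == b' then cube_adj y y' else y == y'.
Proof.
case: (b =P b') => [<-|ne]; apply/idP/idP.
- case/cube_adjP => m; case: (unliftP j m) => [l ->|->].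
    by rewrite flip_cube_ins_lift => /cube_ins_inj [_ ->]; apply: cube_adj_flip.
  by rewrite flip_cube_ins_at => /cube_ins_inj [] /esym; case: b.
- by case/cube_adjP => l ->; rewrite -flip_cube_ins_lift; apply: cube_adj_flip.
- case/cube_adjP => m; case: (unliftP j m) => [l ->|->].
    by rewrite flip_cube_ins_lift => /cube_ins_inj [] /esym.
  by rewrite flip_cube_ins_at => /cube_ins_inj [_ ->].
- move/eqP <-; have -> : b' = ~~ b by move: ne; case: b; case: b'.
  by rewrite -flip_cube_ins_at; apply: cube_adj_flip.
Qed.

End CubeInsert.

Section PellWords.
Variable k : nat.
Local Notation W n := (word n k).

Definition wcons n (a : 'I_k.+1) (w : W n) : W n.+1 := [tuple of a :: w].
Definition wbehead n (w : W n.+1) : W n := [tuple of behead w].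
Definition first_letter n (w : W n.+1) : nat := thead w.

Lemma wseq_cons n a (w : W n) : wseq (wcons a w) = (a : nat) :: wseq w.
Proof. by []. Qed.

Lemma wseq_first n (w : W n.+1) : wseq w = first_letter w :: wseq (wbehead w).
Proof. by rewrite {1}(tuple_eta w). Qed.

Lemma first_letter_wcons n a (w : W n) : first_letter (wcons a w) = a.
Proof. by rewrite /first_letter theadE. Qed.

Lemma first_letter_lt n (w : W n.+1) : first_letter w < k.+1.
Proof. exact: ltn_ord. Qed.

Lemma wcons_inj n a : injective (@wcons n a).
Proof. by move=> u v [/val_inj]. Qed.

Lemma wseq_inj n : injective (@wseq n k).
Proof. by move=> u v /(inj_map val_inj) /val_inj. Qed.

Lemma size_wseq n (w : W n) : size (wseq w) = n.
Proof. by rewrite size_map size_tuple. Qed.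

Lemma pi_adjE n (u v : W n) : pi_adj u v = pell_edge k (wseq u) (wseq v).
Proof. by rewrite /pi_adj pell_adjE // !size_wseq. Qed.

Lemma pi_adj_sym n (u v : W n) : pi_adj u v = pi_adj v u.
Proof. by rewrite !pi_adjE pell_edge_sym. Qed.

Definition pell_cube_sets n i : {set {set W n}} :=
  [set S : {set W n} |
      [forall w in S, is_pell w] &&
      [exists f : {ffun cube i -> W n},
         [&& injectiveb f, f @: setT == S &
             [forall a, forall b, pi_adj (f a) (f b) == cube_adj a b]]]].

Lemma cube_countE n i : cube_count n k i = #|pell_cube_sets n i|.
Proof. by []. Qed.

Definition pell_cube_emb n i (f : cube i -> W n) :=
  [/\ injective f, forall x, is_pell (f x) & forall x y, pi_adj (f x) (f y) = cube_adj x y].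

Lemma pell_cube_setsP n i (S : {set W n}) :
  reflect (exists2 f : cube i -> W n, pell_cube_emb f & S = f @: setT)
          (S \in pell_cube_sets n i).
Proof.
apply: (iffP idP).
  rewrite inE => /andP [/forallP f_pell /existsP [f]].
  case/and3P => /injectiveP f_inj /eqP fS /forallP f_adj.
  exists f; last by rewrite fS.
  split=> // [x|x y]; first by have := f_pell (f x); rewrite -fS imset_f ?inE.
  by have /forallP /(_ y) /eqP := f_adj x.
case=> f [f_inj f_pell f_adj] ->; rewrite inE; apply/andP; split.
  by apply/forallP => w; apply/implyP => /imsetP [x _ ->].
apply/existsP; exists [ffun x => f x]; apply/and3P; split.
- by apply/injectiveP => x y; rewrite !ffunE; apply: f_inj.
- by apply/eqP; apply: eq_imset => x; rewrite ffunE.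
- by apply/forallP => x; apply/forallP => y; rewrite !ffunE f_adj.
Qed.

(* An induced cube [S] either has a constant first letter ([~~ mixed_first S]) or
   takes the two values [max_first S - 1] and [max_first S]. *)
Definition max_first n (S : {set W n.+1}) := \max_(w in S) first_letter w.
Definition mixed_first n (S : {set W n.+1}) := [exists w in S, first_letter w != max_first S].

Lemma max_first_ge n (S : {set W n.+1}) w : w \in S -> first_letter w <= max_first S.
Proof. exact: leq_bigmax_cond. Qed.

Lemma max_first_lt n (S : {set W n.+1}) : max_first S < k.+1.
Proof. by rewrite ltnS; apply/bigmax_leqP => w _; rewrite -ltnS first_letter_lt. Qed.

Lemma max_first_attained n (S : {set W n.+1}) :
  S != set0 -> exists2 w, w \in S & first_letter w = max_first S.
Proof.
case/set0Pn => w0 w0S; have S_gt0 : 0 < #|S| by apply/card_gt0P; exists w0.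
by have [w wS maxw] := eq_bigmax_cond (@first_letter n) S_gt0; exists w; rewrite // /max_first maxw.
Qed.

Lemma first_letter_unmixed n (S : {set W n.+1}) w :
  ~~ mixed_first S -> w \in S -> first_letter w = max_first S.
Proof. by move=> /existsPn /(_ w) + wS; rewrite wS => /negPn /eqP. Qed.

Lemma max_first_const n (S : {set W n.+1}) a : S != set0 ->
  (forall w, w \in S -> first_letter w = a) -> max_first S = a /\ ~~ mixed_first S.
Proof.
move=> /max_first_attained [w wS maxw] Sa.
have maxa : max_first S = a by rewrite -maxw Sa.
by split=> //; apply/existsPn => w'; apply/negP => /andP [w'S]; rewrite Sa // maxa eqxx.
Qed.

Lemma max_first_two n (S : {set W n.+1}) a w1 w2 : 0 < a ->
  (forall w, w \in S -> first_letter w = a \/ first_letter w = a.-1) ->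
  w1 \in S -> first_letter w1 = a -> w2 \in S -> first_letter w2 = a.-1 ->
  max_first S = a /\ mixed_first S.
Proof.
move=> a_gt0 Sa w1S w1a w2S w2a.
have maxSa : max_first S = a.
  apply/eqP; rewrite eqn_leq -{2}w1a max_first_ge // andbT.
  by apply/bigmax_leqP => w wS; case: (Sa w wS) => ->; lia.
by split=> //; apply/existsP; exists w2; rewrite w2S w2a maxSa; apply/eqP; lia.
Qed.

Lemma imset_cube_neq0 n i (f : cube i -> W n) : f @: setT != set0.
Proof. by apply/set0Pn; exists (f [ffun=> false]); rewrite imset_f. Qed.

Lemma mixed_first_nonconst n i (f : cube i -> W n.+1) : mixed_first (f @: setT) ->
  ~ (forall x y, first_letter (f x) = first_letter (f y)).
Proof.
move=> mixed const; pose x0 : cube i := [ffun=> false].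
have fx0 w : w \in f @: setT -> first_letter w = first_letter (f x0).
  by case/imsetP => x _ ->.
by have [_] := max_first_const (imset_cube_neq0 f) fx0; rewrite mixed.
Qed.

Hypothesis k_gt1 : 1 < k.

Lemma first_letter_structure n i (f : cube i -> W n.+1) : pell_cube_emb f ->
  (forall x y, first_letter (f x) = first_letter (f y)) \/
  exists j s b, forall x, first_letter (f x) = b + (x j == s).
Proof.
case=> f_inj _ f_adj; pose h x := first_letter (f x).
have edge_f x l : pell_edge k (h x :: wseq (wbehead (f x)))
                             (h (flip l x) :: wseq (wbehead (f (flip l x)))).
  by rewrite -!wseq_first -pi_adjE f_adj cube_adj_flip.
have flip_eq x j l : h (flip j x) = h (flip l x) ->
    wseq (wbehead (f (flip j x))) = wseq (wbehead (f (flip l x))) -> j = l.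
  by move=> hjl tjl; apply/(@flip_injl _ x)/f_inj/wseq_inj; rewrite !wseq_first tjl; congr (_ :: _).
apply: (height_structure (h := h)) => [x l|x j l hj hl|x j l hj hl].
- exact: pell_edge_head_le (edge_f x l).
- apply: (flip_eq x); first by rewrite hj hl.
  have := edge_f x j; have := edge_f x l; rewrite hl => el; rewrite hj => ej.
  exact: pell_edge_up_tail ej el.
- have hjl : h (flip j x) = h (flip l x) by lia.
  apply: (flip_eq x _ _ hjl).
  have := edge_f x l; have := edge_f x j.
  rewrite !(pell_edge_sym k (h x :: _)) -hl hjl.
  exact: pell_edge_up_tail_inj.
Qed.

End PellWords.

Section Fibers.
Variable k : nat.
Hypothesis k_gt1 : 1 < k.
Local Notation W n := (word n k).
Local Notation CS := (pell_cube_sets k).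

Definition const_fiber n i a : {set {set W n.+1}} :=
  [set S in CS n.+1 i | (max_first S == a) && ~~ mixed_first S].

Definition mixed_fiber n i a : {set {set W n.+1}} :=
  [set S in CS n.+1 i | (max_first S == a) && mixed_first S].

Section ConstantFiber.
Variables (m n i a : nat) (C : W m -> W n.+1).
Hypotheses (C_inj : injective C) (C_first : forall w, first_letter (C w) = a).
Hypotheses (C_adj : forall u v, pi_adj (C u) (C v) = pi_adj u v)
           (C_pell : forall w, is_pell (C w) = is_pell w).
Hypothesis C_onto : forall p, is_pell p -> first_letter p = a -> exists w, p = C w.

Lemma card_const_fiber : #|const_fiber n i a| = #|CS m i|.
Proof.
suff -> : const_fiber n i a = (fun T : {set W m} => C @: T) @: CS m i.
  by rewrite card_imset //; apply: imset_inj.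
apply/setP => S; rewrite inE; apply/andP/imsetP.
- case=> /pell_cube_setsP [f [f_inj f_pell f_adj] ->] /andP [/eqP maxa unmixed].
  have fa x : first_letter (f x) = a.
    by rewrite -maxa; apply: (first_letter_unmixed unmixed); rewrite imset_f.
  have [g fg] := fin_all_exists (fun x => C_onto (f_pell x) (fa x)).
  exists (g @: setT); last by rewrite -imset_comp; apply: eq_imset.
  apply/pell_cube_setsP; exists g => //; split.
  + by move=> x y gxy; apply: f_inj; rewrite !fg gxy.
  + by move=> x; rewrite -C_pell -fg.
  + by move=> x y; rewrite -C_adj -!fg f_adj.
- case=> T /pell_cube_setsP [g [g_inj g_pell g_adj] ->] ->; rewrite -imset_comp.
  split.
    apply/pell_cube_setsP; exists (C \o g) => //; split.
    + by move=> x y /C_inj /g_inj.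
    + by move=> x; rewrite /= C_pell.
    + by move=> x y; rewrite /= C_adj.
  have Ca w : w \in (C \o g) @: setT -> first_letter w = a by case/imsetP => x _ ->; apply: C_first.
  have [maxa unmixed] := max_first_const (imset_cube_neq0 (C \o g)) Ca.
  by rewrite maxa eqxx unmixed.
Qed.

End ConstantFiber.

Section MixedFiber.
Variables (m n i a : nat) (L U : W m -> W n.+1).
Hypotheses (a_gt0 : 0 < a) (L_inj : injective L) (U_inj : injective U).
Hypotheses (L_first : forall w, first_letter (L w) = a.-1)
           (U_first : forall w, first_letter (U w) = a).
Hypotheses (L_adj : forall u v, pi_adj (L u) (L v) = pi_adj u v)
           (U_adj : forall u v, pi_adj (U u) (U v) = pi_adj u v)
           (LU_adj : forall u v, pi_adj (L u) (U v) = (u == v)).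
Hypotheses (L_pell : forall w, is_pell (L w) = is_pell w)
           (U_pell : forall w, is_pell (U w) = is_pell w).
Hypothesis LU_onto : forall p q, first_letter p = a.-1 -> first_letter q = a ->
  pi_adj p q -> exists w, p = L w /\ q = U w.

Lemma L_neq_U u v : L u <> U v.
Proof. by move=> LU; have := L_first u; rewrite LU U_first; lia. Qed.

Definition doubled (T : {set W m}) : {set W n.+1} := L @: T :|: U @: T.

Lemma mem_doubled_L T w : (L w \in doubled T) = (w \in T).
Proof.
rewrite inE mem_imset //; case: (w \in T) => //=.
by apply/negbTE/imsetP => -[w' _ /L_neq_U].
Qed.

Definition double_emb (j : 'I_i.+1) (s : bool) (g : cube i -> W m) (x : cube i.+1) :=
  if x j == s then U (g (cube_proj j x)) else L (g (cube_proj j x)).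

Lemma double_emb_ins j s g b y :
  double_emb j s g (cube_ins j b y) = if b == s then U (g y) else L (g y).
Proof. by rewrite /double_emb cube_ins_at cube_insK. Qed.

Lemma doubled_imset j s g : doubled (g @: setT) = double_emb j s g @: setT.
Proof.
apply/setP => w; apply/setUP/imsetP.
- case=> /imsetP [_ /imsetP [y _ ->] ->].
    by exists (cube_ins j (~~ s) y); rewrite // double_emb_ins; case: s.
  by exists (cube_ins j s y); rewrite // double_emb_ins eqxx.
- case=> x _ ->; rewrite -(cube_projK j x) double_emb_ins.
  by case: eqP => _; [right | left]; apply/imset_f/imset_f.
Qed.

Lemma first_letter_double_emb j s g x :
  first_letter (double_emb j s g x) = if x j == s then a else a.-1.
Proof. by rewrite /double_emb; case: ifP. Qed.

Lemma double_embP j s g : pell_cube_emb g -> pell_cube_emb (double_emb j s g).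
Proof.
case=> g_inj g_pell g_adj; split=> [x x' E|x|x x'].
- have same_side : (x j == s) = (x' j == s).
    move/(congr1 (@first_letter _ _)): E; rewrite !first_letter_double_emb.
    by case: eqP; case: eqP => // _ _; lia.
  have xx' : x' j = x j by move: same_side; case: (x j); case: (x' j); case: (s).
  rewrite -(cube_projK j x) -(cube_projK j x') xx'; congr cube_ins; apply: g_inj.
  by move: E; rewrite /double_emb same_side; case: ifP => _; [apply: U_inj | apply: L_inj].
- by rewrite -(cube_projK j x) double_emb_ins; case: eqP; rewrite ?U_pell ?L_pell.
- rewrite -(cube_projK j x) -(cube_projK j x') !double_emb_ins cube_adj_ins.
  by case: (x j); case: (x' j); case: (s);
    rewrite ?U_adj ?L_adj ?LU_adj ?g_adj ?(inj_eq g_inj) // pi_adj_sym LU_adj (inj_eq g_inj) eq_sym.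
Qed.

Lemma doubled_in_fiber T : T \in CS m i -> doubled T \in mixed_fiber n i.+1 a.
Proof.
case/pell_cube_setsP => g g_emb ->; rewrite inE (doubled_imset ord0 true).
pose f := double_emb ord0 true g; pose y0 : cube i := [ffun=> false].
pose x_up := cube_ins ord0 true y0; pose x_lo := cube_ins ord0 false y0.
have two w : w \in f @: setT -> first_letter w = a \/ first_letter w = a.-1.
  by case/imsetP => x _ ->; rewrite first_letter_double_emb; case: eqP; [left|right].
have up_a : first_letter (f x_up) = a by rewrite first_letter_double_emb cube_ins_at.
have lo_a : first_letter (f x_lo) = a.-1 by rewrite first_letter_double_emb cube_ins_at.
have [-> ->] :=
  max_first_two a_gt0 two (imset_f f (in_setT x_up)) up_a (imset_f f (in_setT x_lo)) lo_a.
by rewrite eqxx !andbT; apply/pell_cube_setsP; exists f => //; apply: double_embP.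
Qed.

Lemma cube_halves_doubled j s (f : cube i.+1 -> W n.+1) : pell_cube_emb f ->
  (forall y, first_letter (f (cube_ins j (~~ s) y)) = a.-1) ->
  (forall y, first_letter (f (cube_ins j s y)) = a) ->
  exists2 g : cube i -> W m, pell_cube_emb g & f @: setT = doubled (g @: setT).
Proof.
case=> f_inj f_pell f_adj f_lo f_up.
have f_lo_up y : pi_adj (f (cube_ins j (~~ s) y)) (f (cube_ins j s y)).
  by rewrite f_adj cube_adj_ins; case: (s); rewrite /= eqxx.
have [g fg] := fin_all_exists (fun y => LU_onto (f_lo y) (f_up y) (f_lo_up y)).
exists g; first split=> [y y' gy|y|y y'].
- have := f_inj (cube_ins j (~~ s) y) (cube_ins j (~~ s) y').
  by rewrite !(fg _).1 gy => /(_ erefl) /cube_ins_inj [].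
- by rewrite -L_pell -(fg y).1.
- by rewrite -L_adj -(fg y).1 -(fg y').1 f_adj cube_adj_ins eqxx.
rewrite (doubled_imset j s); apply: eq_imset => x.
rewrite -(cube_projK j x) double_emb_ins; case: eqP => [->|xs]; first by rewrite (fg _).2.
have -> : x j = ~~ s by move: xs; case: (x j); case: (s).
by rewrite (fg _).1.
Qed.

Lemma mixed_fiber_doubled S :
  S \in mixed_fiber n i.+1 a -> exists2 T, T \in CS m i & S = doubled T.
Proof.
rewrite inE => /andP [/pell_cube_setsP [f f_emb ->] /andP [/eqP maxa mixed]].
have [/(mixed_first_nonconst mixed) //|[j [s [b fb]]]] := first_letter_structure k_gt1 f_emb.
have f_up y : first_letter (f (cube_ins j s y)) = b.+1 by rewrite fb cube_ins_at eqxx addn1.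
have f_lo y : first_letter (f (cube_ins j (~~ s) y)) = b.+1.-1.
  by rewrite fb cube_ins_at; case: (s); rewrite addn0.
have two w : w \in f @: setT -> first_letter w = b.+1 \/ first_letter w = b.+1.-1.
  by case/imsetP => x _ ->; rewrite fb; case: eqP; [left; rewrite addn1 | right; rewrite addn0].
pose y0 : cube i := [ffun=> false].
have [maxb _] := max_first_two (ltn0Sn b) two (imset_f f (in_setT (cube_ins j s y0))) (f_up y0)
  (imset_f f (in_setT (cube_ins j (~~ s) y0))) (f_lo y0).
have ab : b.+1 = a by rewrite -maxb.
rewrite ab in f_lo f_up.
have [g g_emb ->] := cube_halves_doubled f_emb f_lo f_up.
by exists (g @: setT) => //; apply/pell_cube_setsP; exists g.
Qed.

Lemma card_mixed_fiber : #|mixed_fiber n i.+1 a| = #|CS m i|.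
Proof.
suff -> : mixed_fiber n i.+1 a = doubled @: CS m i.
  by rewrite card_imset // => T T' TT'; apply/setP => w; rewrite -!mem_doubled_L TT'.
apply/setP => S; apply/idP/imsetP => [/mixed_fiber_doubled|[T T_cube ->]] //.
exact: doubled_in_fiber.
Qed.

End MixedFiber.
End Fibers.

Section FiberCounts.
Variable k : nat.
Hypothesis k_gt1 : 1 < k.
Local Notation W n := (word n k).
Local Notation CS := (pell_cube_sets k).
Local Notation const_fiber := (const_fiber k).
Local Notation mixed_fiber := (mixed_fiber k).

Definition wcons2 n (c : 'I_k.+1) (w : W n) : W n.+2 := wcons c (wcons c w).

Lemma wcons2_inj n c : injective (@wcons2 n c).
Proof. by move=> u v /wcons_inj /wcons_inj. Qed.

Lemma wseq_cons2 n c (w : W n) : wseq (wcons2 c w) = [:: c : nat, c : nat & wseq w].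
Proof. by []. Qed.

Lemma is_pell_wcons n (c : 'I_k.+1) (w : W n) : c != k :> nat -> is_pell (wcons c w) = is_pell w.
Proof. by rewrite /is_pell wseq_cons /= => /negbTE ->. Qed.

Lemma is_pell_wcons2k n (w : W n) : is_pell (wcons2 (inord k) w) = is_pell w.
Proof. by rewrite /is_pell wseq_cons2 inordK //= eqxx. Qed.

Lemma pi_adj_wcons n c (u v : W n) : pi_adj (wcons c u) (wcons c v) = pi_adj u v.
Proof. by rewrite !pi_adjE !wseq_cons pell_edge_cons2. Qed.

Lemma pi_adj_wcons2 n c (u v : W n) : pi_adj (wcons2 c u) (wcons2 c v) = pi_adj u v.
Proof. by rewrite /wcons2 !pi_adj_wcons. Qed.

Lemma first_letter_inord n a (w : W n) : a < k.+1 -> first_letter (wcons (inord a) w) = a.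
Proof. by move=> ak; rewrite first_letter_wcons inordK. Qed.

Lemma card_const_fiber_lt n i a : a < k -> #|const_fiber n i a| = #|CS n i|.
Proof.
move=> ak; have ak1 : a < k.+1 by lia.
apply: (@card_const_fiber _ _ _ i a (wcons (inord a))) => [|w|u v|w|p _ pa].
- exact: wcons_inj.
- exact: first_letter_inord.
- exact: pi_adj_wcons.
- by rewrite is_pell_wcons // inordK //; apply/eqP; lia.
- exists (wbehead p); apply: wseq_inj.
  by rewrite wseq_cons wseq_first inordK // pa.
Qed.

Lemma card_const_fiber_k m i : #|const_fiber m.+1 i k| = #|CS m i|.
Proof.
apply: (@card_const_fiber _ _ _ i k (wcons2 (inord k))) => [|w|u v|w|p].
- exact: wcons2_inj.
- exact: first_letter_inord.
- exact: pi_adj_wcons2.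
- exact: is_pell_wcons2k.
- rewrite /is_pell (wseq_first p) (wseq_first (wbehead p)) => + p1k; rewrite p1k /= eqxx.
  case/andP => /eqP p2k _; exists (wbehead (wbehead p)); apply: wseq_inj.
  by rewrite wseq_cons2 inordK // (wseq_first p) (wseq_first (wbehead p)) p1k p2k.
Qed.

Lemma card_mixed_fiber_lt n i a : 0 < a < k -> #|mixed_fiber n i.+1 a| = #|CS n i|.
Proof.
move=> a_range; have a1 : a.-1 < k.+1 by lia.
have a2 : a < k.+1 by lia.
apply: (@card_mixed_fiber _ k_gt1 _ _ i a (wcons (inord a.-1)) (wcons (inord a)))
  => [|||w|w|u v|u v|u v|w|w|p q pa qa].
- lia.
- exact: wcons_inj.
- exact: wcons_inj.
- exact: first_letter_inord.
- exact: first_letter_inord.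
- exact: pi_adj_wcons.
- exact: pi_adj_wcons.
- rewrite !pi_adjE !wseq_cons !inordK // pell_edge_letter_cross ?(inj_eq (@wseq_inj _ _)) //.
  lia.
- by rewrite is_pell_wcons // inordK //; apply/eqP; lia.
- by rewrite is_pell_wcons // inordK //; apply/eqP; lia.
- have a_succ : a = a.-1.+1 by lia.
  rewrite pi_adjE (wseq_first p) (wseq_first q) pa qa.
  case/(pell_edge_up k_gt1)/(_ a_succ) => [[_ tq]|[_ ?]]; last lia.
  exists (wbehead p); split; apply: wseq_inj; rewrite wseq_cons inordK //.
    by rewrite (wseq_first p) pa.
  by rewrite (wseq_first q) qa tq.
Qed.

Lemma card_mixed_fiber_k m i : #|mixed_fiber m.+1 i.+1 k| = #|CS m i|.
Proof.
have kk : (inord k : 'I_k.+1) = k :> nat by rewrite inordK.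
have kk1 : (inord k.-1 : 'I_k.+1) = k.-1 :> nat by rewrite inordK //; lia.
apply: (@card_mixed_fiber _ k_gt1 _ _ i k (wcons2 (inord k.-1)) (wcons2 (inord k)))
  => [|||w|w|u v|u v|u v|w|w|p q pk1 pk].
- lia.
- exact: wcons2_inj.
- exact: wcons2_inj.
- by rewrite first_letter_inord //; lia.
- exact: first_letter_inord.
- exact: pi_adj_wcons2.
- exact: pi_adj_wcons2.
- by rewrite !pi_adjE !wseq_cons2 kk kk1 pell_edge_pair_cross // (inj_eq (@wseq_inj _ _)).
- by rewrite /wcons2 !is_pell_wcons // kk1; apply/eqP; lia.
- exact: is_pell_wcons2k.
- have k_succ : k = k.-1.+1 by lia.
  rewrite pi_adjE (wseq_first p) (wseq_first q) pk1 pk.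
  case/(pell_edge_up k_gt1)/(_ k_succ) => [[? _]|[_ _ [w [tp tq]]]]; first lia.
  have tw : wseq (wbehead (wbehead p)) = w by move: tp; rewrite wseq_first => -[].
  exists (wbehead (wbehead p)); split; apply: wseq_inj; rewrite wseq_cons2 ?kk ?kk1 tw.
    by rewrite (wseq_first p) pk1 tp.
  by rewrite (wseq_first q) pk tq.
Qed.

End FiberCounts.

Lemma sum_ord_const_except0 K (F : nat -> nat) c d :
  (forall a, a < K -> F a = c + (if a == 0 then 0 else d)) ->
  \sum_(a < K) F a = K * c + K.-1 * d.
Proof.
elim: K => [|K IH] FK; first by rewrite big_ord0.
rewrite big_ord_recr /= IH => [|a aK]; last by apply: FK; lia.
by rewrite FK //; case: K {IH FK} => [|K] /=; lia.
Qed.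

Section Recurrence.
Variable k : nat.
Hypothesis k_gt1 : 1 < k.
Local Notation W n := (word n k).
Local Notation CS := (pell_cube_sets k).
Local Notation const_fiber := (const_fiber k).
Local Notation mixed_fiber := (mixed_fiber k).

Lemma mixed_fiber_first0 n i : mixed_fiber n i 0 = set0.
Proof.
apply/setP => S; rewrite !inE; apply/negbTE/and3P => -[_ /eqP max0 /existsP [w /andP [wS]]].
by have := max_first_ge wS; rewrite max0 leqn0 => /eqP ->.
Qed.

Lemma mixed_fiber_dim0 n a : mixed_fiber n 0 a = set0.
Proof.
apply/setP => S; rewrite inE in_set0; apply/negbTE/and3P => -[/pell_cube_setsP [f _ ->] _ mixed].
by apply: mixed_first_nonconst mixed _ => x y; rewrite (cube0_eq x y).
Qed.

Lemma max_first_len1 i S : S \in CS 1 i -> max_first S != k.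
Proof.
case/pell_cube_setsP => f [_ f_pell _] ->; apply/eqP => maxk.
have [w /imsetP [x _ ->] wk] := max_first_attained (imset_cube_neq0 f).
move: (f_pell x); rewrite /is_pell (wseq_first (f x)) wk maxk.
by case: (wseq _) (size_wseq (wbehead (f x))) => //= _; rewrite eqxx.
Qed.

Lemma card_cube_sets_fibers n i :
  #|CS n.+1 i| = \sum_(a < k.+1) (#|const_fiber n i a| + #|mixed_fiber n i a|).
Proof.
rewrite -sum1_card (partition_big (fun S => (inord (max_first S) : 'I_k.+1)) predT) //=.
apply: eq_bigr => a _; rewrite (bigID (@mixed_first k n)) /= addnC -!sum1_card.
have maxE (S : {set W n.+1}) : (inord (max_first S) == a) = (max_first S == a).
  by rewrite -(inj_eq val_inj) /= inordK //; apply: max_first_lt.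
by congr (_ + _); apply: eq_bigl => S; rewrite !inE maxE -andbA.
Qed.

Lemma card_fibers_lt n i a : a < k ->
  #|const_fiber n i a| + #|mixed_fiber n i a| =
  #|CS n i| + (if a == 0 then 0 else if i is i'.+1 then #|CS n i'| else 0).
Proof.
move=> ak; rewrite card_const_fiber_lt //; congr (_ + _).
case: eqP => [->|a0]; first by rewrite mixed_fiber_first0 cards0.
by case: i => [|i']; rewrite ?mixed_fiber_dim0 ?cards0 ?card_mixed_fiber_lt //; lia.
Qed.

Lemma card_fibers_top n i :
  #|const_fiber n i k| + #|mixed_fiber n i k| =
  if n is m.+1 then #|CS m i| + (if i is i'.+1 then #|CS m i'| else 0) else 0.
Proof.
case: n => [|m].
  have no_k P : [set S in CS 1 i | (max_first S == k) && P S] = set0.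
    by apply/setP => S; rewrite inE in_set0; apply/negbTE/and3P => -[/max_first_len1 /negbTE ->].
  by rewrite /const_fiber /mixed_fiber !no_k !cards0.
rewrite card_const_fiber_k //.
by case: i => [|i']; rewrite ?mixed_fiber_dim0 ?cards0 ?card_mixed_fiber_k.
Qed.

Lemma card_cube_sets_rec n i : #|CS n.+1 i| =
  k * #|CS n i| + (if n is m.+1 then #|CS m i| else 0) +
  (if i is i'.+1 then k.-1 * #|CS n i'| + (if n is m.+1 then #|CS m i'| else 0) else 0).
Proof.
rewrite card_cube_sets_fibers big_ord_recr /= card_fibers_top.
rewrite (sum_ord_const_except0 (F := fun a => #|const_fiber n i a| + #|mixed_fiber n i a|)
           (c := #|CS n i|) (d := if i is i'.+1 then #|CS n i'| else 0)) => [|a ak].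
  by case: n => [|m]; case: i => [|i'] /=; lia.
exact: card_fibers_lt.
Qed.

Lemma card_cube_sets00 : #|CS 0 0| = 1.
Proof.
pose x0 : cube 0 := [ffun=> false]; pose w0 : W 0 := [tuple].
suff -> : CS 0 0 = [set setT] by rewrite cards1.
have W0_eq (u : W 0) : u = w0 by rewrite (tuple0 u).
apply/setP => S; rewrite in_set1; apply/pell_cube_setsP/eqP => [[f _ ->]|->].
  by apply/setP => w; rewrite inE (W0_eq w) -(W0_eq (f x0)) imset_f.
exists (fun _ => w0); first by split=> [x y _|x|x y]; rewrite ?(cube0_eq x y) ?cube_adjxx ?pi_adjE.
by apply/setP => w; rewrite inE (W0_eq w) (imset_f _ (in_setT x0)).
Qed.

Lemma card_cube_sets0S i : #|CS 0 i.+1| = 0.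
Proof.
apply/eqP; rewrite cards_eq0; apply/eqP/setP => S; rewrite in_set0.
apply/negbTE/negP => /pell_cube_setsP [f [f_inj _ _] _].
pose x0 : cube i.+1 := [ffun=> false].
have /f_inj/(congr1 (fun x : cube i.+1 => x ord0)) : f x0 = f (flip ord0 x0).
  by rewrite (tuple0 (f x0)) (tuple0 (f (flip _ _))).
by rewrite !ffunE.
Qed.

Lemma card_cube_sets_big n i : #|{: W n}| < i -> #|CS n i| = 0.
Proof.
move=> Wi; apply/eqP; rewrite cards_eq0; apply/eqP/setP => S; rewrite in_set0.
apply/negbTE/negP => /pell_cube_setsP [f [f_inj _ _] _].
have := leq_card _ f_inj; rewrite card_ffun card_bool card_ord => cube_le_W.
by have := ltn_trans (leq_trans (ltn_expl i (ltnSn 1)) cube_le_W) Wi; rewrite ltnn.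
Qed.

End Recurrence.

Import GRing.Theory.
Local Open Scope ring_scope.

Definition rec2_denom (R : pzRingType) (a b : R) (j : nat) : R :=
  if j == 0%N then 1 else if j == 1%N then - a else if j == 2%N then - b else 0.

Lemma rec2_denom_convolution (R : comPzRingType) (P : nat -> R) (a b : R) :
  P 0%N = 1 -> P 1%N = a -> (forall n, P n.+2 = a * P n.+1 + b * P n) ->
  forall m, \sum_(i < m.+1) P i * rec2_denom a b (m - i) = (m == 0%N)%:R.
Proof.
move=> P0 P1 PSS [|[|m]].
- by rewrite big_ord1 P0 mul1r.
- by rewrite !big_ord_recr big_ord0 /= P0 P1 /rec2_denom /= add0r mul1r mulr1 addNr.
rewrite !big_ord_recr /= big1 => [|i _]; last first.
  have : (2 < m.+2 - i)%N by move: (ltn_ord i); lia.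
  by case: (m.+2 - i)%N => [|[|[|j]]] //= _; rewrite mulr0.
rewrite subnn subSnn (_ : (m.+2 - m = 2)%N); last lia.
by rewrite /rec2_denom /= PSS; ring.
Qed.

Section CubePolynomial.
Variable k : nat.
Hypothesis k_gt1 : (1 < k)%N.

Lemma coef_cube_poly n j : (cube_poly n k)`_j = (cube_count n k j)%:R.
Proof.
rewrite /cube_poly coef_sumMXn.
case: (ltnP j #|{: word n k}|.+1) => [jN|Nj].
  by rewrite (big_pred1 (Ordinal jN)) // => i /=; rewrite -(inj_eq val_inj).
rewrite cube_countE card_cube_sets_big // big_pred0 // => i.
by apply/eqP => ij; move: (ltn_ord i); rewrite ij ltnNge Nj.
Qed.

Lemma coef_lin_mul (c d : nat) (p : {poly int}) j :
  ((c%:R + d%:R *: 'X) * p)`_j = p`_j *+ c + d%:R * (if j == 0%N then 0 else p`_j.-1).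
Proof. by rewrite mulrDl coefD mulr_natl coefMn -scalerAl coefZ coefXM. Qed.

Lemma cube_poly0 : cube_poly 0 k = 1.
Proof.
apply/polyP => j; rewrite coef_cube_poly coefC cube_countE.
by case: j => [|j]; rewrite ?card_cube_sets00 ?card_cube_sets0S.
Qed.

Lemma cube_poly1 : cube_poly 1 k = k%:R + k.-1%:R *: 'X.
Proof.
apply/polyP => j; rewrite coef_cube_poly cube_countE card_cube_sets_rec //.
rewrite coefD coefZ coefX -polyC_natr coefC.
by case: j => [|[|j]];
  rewrite /= ?card_cube_sets00 ?card_cube_sets0S ?muln0 ?muln1 ?addn0 ?mulr0 ?mulr1 ?addr0 ?add0r.
Qed.

Lemma cube_polySS n : cube_poly n.+2 k =
  (k%:R + k.-1%:R *: 'X) * cube_poly n.+1 k + (1 + 'X) * cube_poly n k.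
Proof.
rewrite (_ : 1 + 'X = 1%:R + 1%:R *: 'X); last by rewrite scale1r.
apply/polyP => j; rewrite coefD !coef_lin_mul.
rewrite !coef_cube_poly !cube_countE card_cube_sets_rec //.
by case: j => [|j] /=; rewrite ?natrD ?natrM; ring.
Qed.

End CubePolynomial.

Theorem proposition5p2 (k : nat) : (2 <= k)%N ->
  forall m : nat,
    \sum_(i < m.+1) cube_poly i k * pell_denom k (m - i) = (m == 0%N)%:R.
Proof.
move=> k_gt1; rewrite (_ : pell_denom k = rec2_denom (k%:R + k.-1%:R *: 'X) (1 + 'X)) //.
exact: rec2_denom_convolution (cube_poly0 k) (cube_poly1 k_gt1) (cube_polySS k_gt1).
Qed.
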